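(* Let $\lambda_1,\lambda_2\in P^+$ with $\lambda_1+\lambda_2=\lambda$, and let $K\ge2$. Then there is a surjective homomorphism of $\mathfrak{sl}_n\otimes\mathbb C[t]$-modules $W_{\mathbb C[t]/(t^K)}(0,\lambda)\twoheadrightarrow F_{\lambda_1,\lambda_2}$.
   Context: $\mathfrak{sl}_n=\mathfrak n^+\oplus\mathfrak h\oplus\mathfrak n^-$, $R^+$ positive roots, $P^+$ dominant integral weights; for $\alpha\in R^+$ fix an $\mathfrak{sl}_2$-triple $e_\alpha,f_\alpha,h_\alpha$ with $f_\alpha\in\mathfrak g_{-\alpha}$. For a commutative algebra $A$, $\mathfrak{sl}_n\otimes A$ has bracket $[x\otimes p,y\otimes q]=[x,y]\otimes pq$; modules for $\mathfrak{sl}_n\otimes\mathbb C[t]/(t^K)$ are regarded as $\mathfrak{sl}_n\otimes\mathbb C[t]$-modules via the quotient map. For $A=\mathbb C[t]/(t^K)$ and $\lambda\in P^+$, the graded local Weyl module $W_A(0,\lambda)$ is the $\mathfrak{sl}_n\otimes A$-module generated by $w$ subject to $(\mathfrak n^+\otimes A).w=0$, $(\mathfrak h\otimes tA).w=0$, $(h\otimes1).w=\lambda(h)w$ for $h\in\mathfrak h$, and $(f_\alpha\otimes1)^{\lambda(h_\alpha)+1}.w=0$ for $\alpha\in R^+$ (i.e. the maximal $\mathfrak{sl}_n$-integrable quotient of the module induced from the one-dimensional $(\mathfrak n^+\oplus\mathfrak h)\otimes A$-module on which $\mathfrak n^+\otimes A$ acts by $0$ and $h\otimes p$ acts by $p(0)\lambda(h)$).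 For $\nu=\lambda_1+\lambda_2$, $F_{\lambda_1,\lambda_2}$ is the $\mathfrak{sl}_n\otimes\mathbb C[t]$-module generated by $\mathbb 1$ subject to $(\mathfrak n^+\otimes\mathbb C[t]).\mathbb 1=0$, $(\mathfrak h\otimes t\mathbb C[t]).\mathbb 1=0$, $(\mathfrak n^-\otimes t^2\mathbb C[t]).\mathbb 1=0$, $(h\otimes1).\mathbb 1=\nu(h)\mathbb 1$, and for $\alpha\in R^+$: $(f_\alpha\otimes1)^{\nu(h_\alpha)+1}.\mathbb 1=0$, $(f_\alpha\otimes t)^{\min\{\lambda_1(h_\alpha),\lambda_2(h_\alpha)\}+1}.\mathbb 1=0$. *)

(* Modules for sl_n (x) C[t] are encoded concretely:
   sl_n (x) C[t] = traceless n x n matrices over C[t] = {poly C},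
   with bracket [x,y] = x y - y x (this is [x (x) p, y (x) q] = [x,y] (x) pq).
   A module is a C-vector space V with a map act : 'M[{poly C}]_n -> V -> V
   which is bilinear and satisfies the bracket axiom on traceless matrices
   (its values on non-traceless matrices are irrelevant junk and are never used). *)
From HB Require Import structures.
From mathcomp Require Import all_boot all_order all_algebra.
Set Implicit Arguments. Unset Strict Implicit. Unset Printing Implicit Defensive.
Import GRing.Theory Num.Theory.
Local Open Scope ring_scope.

Section SlnCt.
Variable C : fieldType.
Variable n : nat.

Definition lie := 'M[{poly C}]_n.
Definition in_sl (x : lie) : bool := \tr x == 0.
Definition lbr (x y : lie) : lie := x *m y - y *m x.

Record slmod := SlMod {
  sm_V :> lmodType C;
  sm_act : lie -> sm_V -> sm_V;
  sm_act_linear : forall x (a : C) (u v : sm_V), in_sl x ->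
      sm_act x (a *: u + v) = a *: sm_act x u + sm_act x v;
  sm_linear_act : forall x y (a : C) (v : sm_V), in_sl x -> in_sl y ->
      sm_act (a%:P *: x + y) v = a *: sm_act x v + sm_act y v;
  sm_bracket : forall x y (v : sm_V), in_sl x -> in_sl y ->
      sm_act (lbr x y) v = sm_act x (sm_act y v) - sm_act y (sm_act x v)
}.

Record slhom (M N : slmod) := SlHom {
  sh_fun :> M -> N;
  sh_linear : forall (a : C) (u v : M), sh_fun (a *: u + v) = a *: sh_fun u + sh_fun v;
  sh_equiv : forall x (v : M), in_sl x -> sh_fun (sm_act x v) = sm_act x (sh_fun v)
}.

Definition generated_by (M : slmod) (m : M) : Prop :=
  forall P : M -> Prop, P m -> P 0 ->
    (forall (a : C) (u v : M), P u -> P v -> P (a *: u + v)) ->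
    (forall x (u : M), in_sl x -> P u -> P (sm_act x u)) ->
    forall v, P v.

(* (M, m) is "the module in the class Cls generated by m subject to Rel":
   M is in Cls, m satisfies Rel, m generates M, and M is universal:
   any (N, u) in Cls with u satisfying Rel receives a hom sending m to u. *)
Definition presents (Cls : slmod -> Prop) (Rel : forall N : slmod, N -> Prop)
    (M : slmod) (m : M) : Prop :=
  [/\ Cls M, Rel M m, generated_by m &
      forall (N : slmod) (u : N), Cls N -> Rel N u -> exists f : slhom M N, f m = u].

Definition strict_upper (x : lie) : Prop := forall i j : 'I_n, (j <= i)%N -> x i j = 0.
Definition strict_lower (x : lie) : Prop := forall i j : 'I_n, (i <= j)%N -> x i j = 0.
Definition diagonal (x : lie) : Prop := forall i j : 'I_n, i != j -> x i j = 0.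
Definition divisible_by (p : {poly C}) (x : lie) : Prop := forall i j, p %| x i j.

(* g (x) C[t]/(t^K)-modules, regarded as g (x) C[t]-modules via the quotient:
   g (x) t^K C[t] acts by zero *)
Definition trunc_mod (K : nat) (M : slmod) : Prop :=
  forall x (v : M), in_sl x -> divisible_by 'X^K x -> sm_act x v = 0.

(* dominant integral weights: lam = sum_k lam k * omega_(k+1), k < n-1 *)
Definition weight := 'I_n.-1 -> nat.

(* lam(h) for a diagonal traceless h in h (x) 1 ; omega_(k+1)(h) = sum_(i <= k) h_ii *)
Definition wt_h (lam : weight) (d : 'M[C]_n) : C :=
  \sum_(k < n.-1) (lam k)%:R * \sum_(i < n | (i <= k)%N) d i i.

(* lam(h_alpha) for alpha = eps_i - eps_j, i < j, h_alpha = E_ii - E_jj *)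
Definition wt_co (lam : weight) (i j : 'I_n) : nat :=
  \sum_(k < n.-1 | (i <= k < j)%N) lam k.

(* f_alpha (x) 1 = E_ji and f_alpha (x) t = t E_ji, for alpha = eps_i - eps_j *)
Definition f_one (i j : 'I_n) : lie := delta_mx j i.
Definition f_t (i j : 'I_n) : lie := 'X *: delta_mx j i.

Definition weyl_rel (lam : weight) (M : slmod) (w : M) : Prop :=
  [/\ (forall x, in_sl x -> strict_upper x -> sm_act x w = 0),
      (forall x, in_sl x -> diagonal x -> divisible_by 'X x -> sm_act x w = 0),
      (forall d : 'M[C]_n, is_diag_mx d -> \tr d = 0 ->
          sm_act (map_mx polyC d) w = wt_h lam d *: w) &
      (forall i j : 'I_n, (i < j)%N -> iter (wt_co lam i j).+1 (@sm_act M (f_one i j)) w = 0)].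

Definition F_rel (lam1 lam2 : weight) (M : slmod) (w : M) : Prop :=
  let nu := fun k => (lam1 k + lam2 k)%N in
  (forall x, in_sl x -> strict_upper x -> sm_act x w = 0) /\
      (forall x, in_sl x -> diagonal x -> divisible_by 'X x -> sm_act x w = 0) /\
      (forall x, in_sl x -> strict_lower x -> divisible_by ('X^2) x -> sm_act x w = 0) /\
      (forall d : 'M[C]_n, is_diag_mx d -> \tr d = 0 ->
          sm_act (map_mx polyC d) w = wt_h nu d *: w) /\
      (forall i j : 'I_n, (i < j)%N -> iter (wt_co nu i j).+1 (@sm_act M (f_one i j)) w = 0) /\
      (forall i j : 'I_n, (i < j)%N ->
          iter (minn (wt_co lam1 i j) (wt_co lam2 i j)).+1 (@sm_act M (f_t i j)) w = 0).

End SlnCt.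

Arguments weight : clear implicits.

(* F_{lam1,lam2} satisfies all defining relations of W(0, lam) with lam = lam1 + lam2:
   the weight relations coincide, and g (x) t^K C[t] (K >= 2) kills the generator
   because its upper, diagonal and lower parts lie in n^+ (x) C[t], h (x) t C[t] and
   n^- (x) t^2 C[t].  Elements of g (x) C[t] killing a generator and forming an ideal
   kill the whole module, so F is a C[t]/(t^K)-module; universality of W gives a map
   sending w to the generator of F, which is therefore onto. *)
From HB Require Import structures.
From mathcomp Require Import all_boot all_order all_algebra.
Set Implicit Arguments. Unset Strict Implicit. Unset Printing Implicit Defensive.
Import GRing.Theory Num.Theory.
Local Open Scope ring_scope.

Section SlModules.
Variables (C : fieldType) (n : nat).
Implicit Types (x y : lie C n) (M N : slmod C n).

Lemma sm_act0 M x : in_sl x -> sm_act x (0 : M) = 0.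
Proof.
move=> sl_x; have := sm_act_linear 1 (0 : M) 0 sl_x.
by rewrite !scale1r !addr0 => /esym/(canRL (addrK _)) ->; rewrite subrr.
Qed.

Lemma sm_actD M x y (v : M) : in_sl x -> in_sl y ->
  sm_act (x + y) v = sm_act x v + sm_act y v.
Proof.
by move=> sl_x sl_y; have := sm_linear_act 1 v sl_x sl_y; rewrite polyC1 !scale1r.
Qed.

Lemma sh_fun0 M N (f : slhom M N) : f 0 = 0.
Proof.
have := sh_linear f 1 0 0.
by rewrite !scale1r !addr0 => /esym/(canRL (addrK _)) ->; rewrite subrr.
Qed.

Lemma in_slD x y : in_sl x -> in_sl y -> in_sl (x + y).
Proof. by rewrite /in_sl mxtraceD => /eqP -> /eqP ->; rewrite addr0. Qed.

Lemma in_sl_lbr x y : in_sl (lbr x y).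
Proof. by rewrite /in_sl /lbr (raddfB (@mxtrace _ n)) /= mxtrace_mulC subrr. Qed.

Lemma divisible_by_lbr p x y : divisible_by p x -> divisible_by p (lbr x y).
Proof.
have dvdp_sum I r (P : pred I) F : (forall k, P k -> p %| F k) -> p %| \sum_(k <- r | P k) F k.
  by move=> p_F; apply: (big_ind (fun q => p %| q)); rewrite ?dvdp0 // => a b; apply: dvdp_add.
move=> p_x i j; rewrite /lbr !mxE.
by apply: dvdp_sub; apply: dvdp_sum => k _; [apply: dvdp_mulr | apply: dvdp_mull].
Qed.

Lemma divisible_by_dvdp p q x : p %| q -> divisible_by q x -> divisible_by p x.
Proof. by move=> pq q_x i j; apply: dvdp_trans pq (q_x i j). Qed.

Lemma generated_ideal_annihilates M (m : M) (P : lie C n -> Prop) :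
  generated_by m ->
  (forall x y, in_sl x -> in_sl y -> P x -> P (lbr x y)) ->
  (forall x, in_sl x -> P x -> sm_act x m = 0) ->
  forall x (v : M), in_sl x -> P x -> sm_act x v = 0.
Proof.
move=> gen_m P_ideal P_m x v; move: v x; apply: gen_m => //.
- by move=> x sl_x _; rewrite sm_act0.
- by move=> a u v hu hv x sl_x Px; rewrite sm_act_linear // hu // hv // scaler0 addr0.
move=> y u sl_y hu x sl_x Px.
have := sm_bracket u sl_x sl_y.
rewrite hu ?in_sl_lbr //; last exact: P_ideal.
by rewrite (hu x) // sm_act0 // subr0 => <-.
Qed.

Lemma generated_hom_surj M N (m : M) (f : slhom M N) :
  generated_by (f m) -> forall v : N, exists u : M, f u = v.
Proof.
apply.
- by exists m.
- by exists 0; rewrite sh_fun0.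
- by move=> a _ _ [u <-] [v <-]; exists (a *: u + v); rewrite sh_linear.
- by move=> x _ sl_x [u <-]; exists (sm_act x u); rewrite sh_equiv.
Qed.

Definition mask_mx (b : rel 'I_n) x : lie C n :=
  \matrix_(i, j) if b i j then x i j else 0.

Definition upper_part := mask_mx (fun i j => i < j)%N.
Definition diag_part := mask_mx (fun i j => i == j).
Definition lower_part := mask_mx (fun i j => j < i)%N.

Lemma triangular_decomposition x : x = upper_part x + (diag_part x + lower_part x).
Proof.
apply/matrixP => i j; rewrite !mxE.
case: ltngtP => [ij|ji|/val_inj ->]; rewrite ?eqxx ?addr0 ?add0r //.
- by rewrite ifF ?addr0 //; apply/negbTE; rewrite neq_ltn ij.
- by rewrite ifF ?add0r //; apply/negbTE; rewrite neq_ltn ji orbT.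
Qed.

Lemma divisible_by_mask p b x : divisible_by p x -> divisible_by p (mask_mx b x).
Proof. by move=> p_x i j; rewrite mxE; case: (b i j); rewrite ?dvdp0. Qed.

Lemma in_sl_mask b x : (forall i, ~~ b i i) -> in_sl (mask_mx b x).
Proof. by move=> bNdiag; apply/eqP/big1 => i _; rewrite mxE (negbTE (bNdiag i)). Qed.

Lemma in_sl_upper_part x : in_sl (upper_part x).
Proof. by apply: in_sl_mask => i; rewrite ltnn. Qed.

Lemma in_sl_lower_part x : in_sl (lower_part x).
Proof. by apply: in_sl_mask => i; rewrite ltnn. Qed.

Lemma in_sl_diag_part x : in_sl x -> in_sl (diag_part x).
Proof. by rewrite /in_sl (_ : \tr _ = \tr x) //; apply: eq_bigr => i _; rewrite mxE eqxx. Qed.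

Lemma strict_upper_upper_part x : strict_upper (upper_part x).
Proof. by move=> i j ji; rewrite mxE ltnNge ji. Qed.

Lemma strict_lower_lower_part x : strict_lower (lower_part x).
Proof. by move=> i j ij; rewrite mxE ltnNge ij. Qed.

Lemma diagonal_diag_part x : diagonal (diag_part x).
Proof. by move=> i j /negbTE ij; rewrite mxE ij. Qed.

Section FRelations.
Variables (lam1 lam2 : weight n) (M : slmod C n) (u : M).
Hypothesis F_u : F_rel lam1 lam2 u.

Lemma F_rel_trunc K : (2 <= K)%N ->
  forall x, in_sl x -> divisible_by 'X^K x -> sm_act x u = 0.
Proof.
case: F_u => [up_u [dg_u [lo_u _]]] K_ge2 x sl_x K_x.
have dvd_K m : (m <= K)%N -> divisible_by 'X^m x.
  by move=> mK; apply: divisible_by_dvdp K_x; rewrite dvdp_exp2l.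
have up0 : sm_act (upper_part x) u = 0.
  exact: up_u (in_sl_upper_part x) (strict_upper_upper_part x).
have dg0 : sm_act (diag_part x) u = 0.
  apply: dg_u (in_sl_diag_part sl_x) (diagonal_diag_part x) _.
  by rewrite -['X]expr1; apply/divisible_by_mask/dvd_K/ltnW.
have lo0 : sm_act (lower_part x) u = 0.
  apply: lo_u (in_sl_lower_part x) (strict_lower_lower_part x) _.
  exact/divisible_by_mask/dvd_K.
rewrite (triangular_decomposition x) !sm_actD ?in_slD //;
  rewrite ?in_sl_upper_part ?in_sl_lower_part ?in_sl_diag_part //.
by rewrite up0 dg0 lo0 !addr0.
Qed.

Lemma F_rel_weyl_rel (lam : weight n) :
  (forall k, lam k = (lam1 k + lam2 k)%N) -> weyl_rel lam u.
Proof.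
move=> lamE; case: F_u => [up_u [dg_u [_ [wt_u [f_u _]]]]]; split=> //.
- move=> d d_diag d_tr; rewrite wt_u //; congr (_ *: _).
  by apply: eq_bigr => k _; rewrite lamE.
- move=> i j ij; have -> : wt_co lam i j = wt_co (fun k => lam1 k + lam2 k)%N i j.
    by apply: eq_bigr => k _; rewrite lamE.
  exact: f_u.
Qed.

End FRelations.

End SlModules.

Theorem proposition9p4 (C : numClosedFieldType) (n : nat)
    (lam1 lam2 lam : weight n) (K : nat) :
  (forall k, lam k = (lam1 k + lam2 k)%N) -> (2 <= K)%N ->
  forall (W : slmod C n) (w : W) (F : slmod C n) (one : F),
    presents (trunc_mod K) (@weyl_rel C n lam) w ->
    presents (fun _ => True) (@F_rel C n lam1 lam2) one ->
    exists f : slhom W F, forall v : F, exists u : W, f u = v.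
Proof.
move=> lamE K_ge2 W w F one [_ _ _ univW] [_ F_one gen_one _].
have trunc_F : trunc_mod K F.
  apply: (generated_ideal_annihilates gen_one) => [x y _ _|]; first exact: divisible_by_lbr.
  exact: (F_rel_trunc F_one K_ge2).
have [f f_w] := univW F one trunc_F (F_rel_weyl_rel F_one lamE).
by exists f; apply: (generated_hom_surj (m := w)); rewrite f_w.
Qed.
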